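(* Consider an execution of Algorithm msu1 on a CNF formula $\varphi$, and let $j\ge 1$. At the $j$-th call of the SAT oracle, either the working formula $\varphi_W$ is unsatisfiable, or every satisfying assignment of $\varphi_W$ assigns value 1 to exactly $j-1$ blocking variables.
   Context: Algorithm msu1 (Fu and Malik). Input: a CNF formula $\varphi$ (a finite set of clauses). All clauses of $\varphi$ are tagged non-auxiliary. The working formula is initialised to $\varphi_W:=\varphi$. Each iteration calls a SAT oracle on $\varphi_W$; the $j$-th such call is iteration $j$. If $\varphi_W$ is unsatisfiable, the oracle returns an unsatisfiable core $\varphi_C\subseteq\varphi_W$, i.e. a subset of the clauses of $\varphi_W$ that is itself unsatisfiable. Then, for each non-auxiliary clause $\omega\in\varphi_C$, a fresh variable $b$ (a blocking variable) is created and $\omega$ is replaced in $\varphi_W$ by $\omega\vee b$. The new clause is tagged non-auxiliary, and $b$ is associated with the original clause from which $\omega$ descends. Let $BV$ be the set of blocking variables created in this iteration. A CNF encoding of $\sum_{b\in BV} b=1$ is added to $\varphi_W$; its clauses are tagged auxiliary. This encoding may use additional auxiliary variables; an assignment to $BV$ extends to a satisfying assignment of the encoding iff exactly one variable of $BV$ is true. If $\varphi_W$ is satisfiable, the algorithm stops and returns $|\varphi|-\nu$, where $\nu$ is the number of blocking variables assigned value 1. *)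

From mathcomp Require Import all_boot.
Set Implicit Arguments. Unset Strict Implicit. Unset Printing Implicit Defensive.

(** Variables are natural numbers; a literal (s, v)
    is the positive literal v if s = true and the negative literal ~v if
    s = false. *)
Definition var := nat.
Definition lit := (bool * var)%type.
Definition clause := seq lit.
Definition cnf := seq clause.
Definition assignment := var -> bool.

Definition lit_sat (a : assignment) (l : lit) : bool := a l.2 == l.1.
Definition clause_sat (a : assignment) (c : clause) : bool := has (lit_sat a) c.
Definition cnf_sat (a : assignment) (f : cnf) : bool := all (clause_sat a) f.
Definition satisfiable (f : cnf) : Prop := exists a, cnf_sat a f.

Definition clause_vars (c : clause) : seq var := map snd c.
Definition cnf_vars (f : cnf) : seq var := flatten (map clause_vars f).

(** Tagged working formula: each entry is a clause together with its tag
    (true = auxiliary, false = non-auxiliary). Positions are kept so that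
    duplicate clauses are distinct entries. *)
Definition tcnf := seq (clause * bool).
Definition tdef : clause * bool := ([::], false).
Definition wclauses (W : tcnf) : cnf := map fst W.

(** One msu1 iteration on an unsatisfiable working formula W:
    - I     : the (positions of the) unsatisfiable core returned by the oracle;
    - bv i  : the fresh blocking variable created for the non-auxiliary
              core clause at position i;
    - enc   : the CNF encoding of  sum_{b in BV} b = 1, possibly using the
              additional auxiliary variables auxv (fresh);
    - W'    : the resulting working formula. *)
Definition msu1_step (W : tcnf) (I : seq nat) (bv : nat -> var)
    (enc : cnf) (auxv : seq var) (W' : tcnf) : Prop :=
  let NA := [seq i <- I | ~~ (nth tdef W i).2] in
  let BV := map bv NA in
  uniq I /\ all (fun i => i < size W) I /\
      ~ satisfiable [seq (nth tdef W i).1 | i <- I] /\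
      uniq BV /\ all (fun b => b \notin cnf_vars (wclauses W)) BV /\
      all (fun x => (x \notin cnf_vars (wclauses W)) && (x \notin BV)) auxv /\
      all (fun x => (x \in BV) || (x \in auxv)) (cnf_vars enc) /\
      (forall a : assignment,
          (exists a' : assignment, (forall b, b \in BV -> a' b = a b)
                                   /\ cnf_sat a' enc)
          <-> count a BV = 1) /\
    W' = [seq (if i \in NA
                 then (rcons (nth tdef W i).1 (true, bv i), false)
                 else nth tdef W i) | i <- iota 0 (size W)]
           ++ map (fun c => (c, true)) enc.

(** msu1_reach phi j W B : in some execution of msu1 on phi, the working
    formula at the j-th SAT-oracle call is W, and B lists all blocking
    variables created before that call. *)
Inductive msu1_reach (phi : cnf) : nat -> tcnf -> seq var -> Prop :=
  | msu1_init : msu1_reach phi 1 (map (fun c => (c, false)) phi) [::]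
  | msu1_next j W B I bv enc auxv W' :
      msu1_reach phi j W B ->
      ~ satisfiable (wclauses W) ->
      msu1_step W I bv enc auxv W' ->
      msu1_reach phi j.+1 W' (B ++ map bv [seq i <- I | ~~ (nth tdef W i).2]).

From mathcomp Require Import all_boot.

Set Implicit Arguments.
Unset Strict Implicit.
Unset Printing Implicit Defensive.

(** Every iteration of msu1 creates a block BV of
    blocking variables and adds, tagged auxiliary, a CNF encoding of
    sum_{b in BV} b = 1.  Auxiliary clauses are never relaxed, so they stay
    in the working formula forever.  Hence at the j-th oracle call the
    working formula contains the encodings of j - 1 blocks, and any model of
    it sets exactly one variable of each block to 1; since the blocking
    variables created so far are the concatenation of these blocks, the
    model sets exactly j - 1 of them to 1. *)

(** A block of blocking variables together with the encoding created for it. *)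
Definition block := (seq var * cnf)%type.

Definition enforces_one (p : block) : Prop :=
  forall a : assignment, cnf_sat a p.2 -> count a p.1 = 1.

Definition encoded_in (W : tcnf) (p : block) : Prop :=
  forall c, c \in p.2 -> (c, true) \in W.

Lemma wclauses_sat (W : tcnf) (e : clause * bool) (a : assignment) :
  e \in W -> cnf_sat a (wclauses W) -> clause_sat a e.1.
Proof. by move=> eW /allP; apply; apply: map_f. Qed.

Lemma count_flatten_one (T : eqType) (P : pred T) (L : seq (seq T)) :
  (forall s, s \in L -> count P s = 1) -> count P (flatten L) = size L.
Proof.
elim: L => [//|s L IH] one /=.
by rewrite count_cat one ?mem_head // IH // => t tL; rewrite one // inE tL orbT.
Qed.

Section Step.
Variables (W : tcnf) (I : seq nat) (bv : nat -> var) (enc : cnf)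
  (auxv : seq var) (W' : tcnf).
Hypothesis step : msu1_step W I bv enc auxv W'.

Let BV := map bv [seq i <- I | ~~ (nth tdef W i).2].

Lemma msu1_step_keeps_aux (c : clause) : (c, true) \in W -> (c, true) \in W'.
Proof.
move: step => [_ [_ [_ [_ [_ [_ [_ [_ ->]]]]]]]] cW.
rewrite mem_cat; apply/orP; left; apply/mapP; exists (index (c, true) W).
  by rewrite mem_iota add0n index_mem.
by rewrite nth_index // mem_filter nth_index.
Qed.

Lemma msu1_step_adds_enc : encoded_in W' (BV, enc).
Proof.
move: step => [_ [_ [_ [_ [_ [_ [_ [_ ->]]]]]]]] c /= cenc.
by rewrite mem_cat map_f ?orbT.
Qed.

Lemma msu1_step_enforces_one : enforces_one (BV, enc).
Proof.
move: step => [_ [_ [_ [_ [_ [_ [_ [iff _]]]]]]]] a /= sat_enc.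
by apply/iff; exists a.
Qed.

End Step.

Lemma msu1_reach_pos (phi : cnf) (j : nat) (W : tcnf) (B : seq var) :
  msu1_reach phi j W B -> 0 < j.
Proof. by case. Qed.

Lemma msu1_reach_blocks (phi : cnf) (j : nat) (W : tcnf) (B : seq var) :
  msu1_reach phi j W B ->
  exists L : seq block,
    [/\ size L = j - 1, B = flatten (map fst L),
        (forall p, p \in L -> enforces_one p)
      & (forall p, p \in L -> encoded_in W p)].
Proof.
elim=> [|{}j {}W {}B I bv enc auxv W' reachW [L [sizeL -> one enc_in]] _ step].
  by exists [::].
have j_gt0 := msu1_reach_pos reachW.
exists (rcons L (map bv [seq i <- I | ~~ (nth tdef W i).2], enc)); split.
- by rewrite size_rcons sizeL subn1 prednK // subSS subn0.
- by rewrite map_rcons -cats1 flatten_cat /= cats0.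
- move=> p; rewrite mem_rcons inE => /orP [/eqP -> | /one //].
  exact: msu1_step_enforces_one step.
- move=> p; rewrite mem_rcons inE => /orP [/eqP -> | pL].
    exact: msu1_step_adds_enc step.
  by move=> c /(enc_in p pL) /(msu1_step_keeps_aux step).
Qed.

Theorem proposition2 (phi : cnf) (j : nat) (W : tcnf) (B : seq var) :
  1 <= j -> msu1_reach phi j W B ->
  ~ satisfiable (wclauses W) \/
  (forall a : assignment, cnf_sat a (wclauses W) -> count a B = j - 1).
Proof.
move=> _ /msu1_reach_blocks [L [<- -> one enc_in]]; right=> a satW.
rewrite count_flatten_one ?size_map // => _ /mapP [p pL ->].
apply: (one p pL); apply/allP => c /(enc_in p pL) cW.
exact: wclauses_sat cW satW.
Qed.
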